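(* Let $R$ be a ring and $a\in R$ an element which is not nilpotent. Then there exists a prime ideal $I$ of $R$ such that $a+I$ is a minimal non-nilpotent element of the factor ring $R/I$.
   Context: All rings are associative with unit; ''ideal'' means two-sided ideal. For an ideal $J$ of a ring $S$, an element $b\in S$ is nilpotent modulo $J$ if $b^n\in J$ for some $n\in\mathbb N$. An element $b$ of a ring $S$ is minimal non-nilpotent if $b$ is not nilpotent and $b$ is nilpotent modulo $J$ for every non-zero ideal $J$ of $S$. *)

From HB Require Import structures.
From mathcomp Require Import all_boot all_order all_algebra.
Set Implicit Arguments. Unset Strict Implicit. Unset Printing Implicit Defensive.
Import GRing.Theory.
Local Open Scope ring_scope.

Definition is_ideal (R : nzRingType) (I : R -> Prop) : Prop :=
  [/\ I 0,
      (forall x y, I x -> I y -> I (x + y)),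
      (forall x, I x -> I (- x)),
      (forall r x, I x -> I (r * x)) &
      (forall r x, I x -> I (x * r))].

(* Prime ideal (non-commutative sense): I <> R, and for ideals A, B,
   AB ⊆ I implies A ⊆ I or B ⊆ I.  (AB ⊆ I iff all products x*y with
   x in A, y in B lie in I, since I is an ideal.) *)
Definition prime_ideal (R : nzRingType) (I : R -> Prop) : Prop :=
  [/\ is_ideal I,
      (exists x, ~ I x) &
      (forall A B : R -> Prop, is_ideal A -> is_ideal B ->
         (forall x y, A x -> B y -> I (x * y)) ->
         (forall x, A x -> I x) \/ (forall x, B x -> I x))].

Definition nilpotent_elt (S : nzRingType) (b : S) : Prop :=
  exists n : nat, b ^+ n = 0.

Definition nilpotent_mod (S : nzRingType) (J : S -> Prop) (b : S) : Prop :=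
  exists n : nat, J (b ^+ n).

Definition minimal_non_nilpotent (S : nzRingType) (b : S) : Prop :=
  ~ nilpotent_elt b /\
  (forall J : S -> Prop, is_ideal J -> (exists x, J x /\ x <> 0) ->
     nilpotent_mod J b).

(** An ideal maximal among those avoiding the powers of [a] exists by Zorn's
    lemma and is prime, as for any multiplicatively closed set: if [A] and [B]
    are not contained in [I], then [A + I] and [B + I] both meet the powers of
    [a], and the product of the two powers lies in [A B + I = I].  Modulo such
    an [I], the image of [a] is not nilpotent, while the preimage of a non-zero
    ideal strictly contains [I] and so contains a power of [a]. *)
From HB Require Import structures.
From mathcomp Require Import all_boot all_order all_algebra.
From mathcomp Require Import boolp classical_sets.
Import GRing.Theory.
Local Open Scope ring_scope.
Local Open Scope classical_set_scope.

Section IdealsAvoiding.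
Context {R : nzRingType}.
Implicit Types A B I J M : set R.

Lemma is_ideal0 : is_ideal [set 0 : R].
Proof.
split => //=.
- by move=> x y -> ->; rewrite addr0.
- by move=> x ->; rewrite oppr0.
- by move=> r x ->; rewrite mulr0.
- by move=> r x ->; rewrite mul0r.
Qed.

Lemma is_ideal_preimage {S : nzRingType} (f : {rmorphism R -> S}) {J : set S} :
  is_ideal J -> is_ideal (f @^-1` J).
Proof.
case=> J0 JD JN JL JR; split; rewrite /preimage /=.
- by rewrite rmorph0.
- by move=> x y Jx Jy; rewrite rmorphD; apply: JD.
- by move=> x Jx; rewrite rmorphN; apply: JN.
- by move=> r x Jx; rewrite rmorphM; apply: JL.
- by move=> r x Jx; rewrite rmorphM; apply: JR.
Qed.

Definition ideal_add A B : set R := [set x + y | x in A & y in B].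

Lemma is_ideal_add {A B} : is_ideal A -> is_ideal B -> is_ideal (ideal_add A B).
Proof.
case=> A0 AD AN AL AR [B0 BD BN BL BR]; split.
- by exists 0 => //; exists 0 => //; rewrite addr0.
- move=> _ _ [x Ax [y By <-]] [x' Ax' [y' By' <-]].
  by exists (x + x'); [exact: AD | exists (y + y'); [exact: BD | rewrite addrACA]].
- move=> _ [x Ax [y By <-]].
  by exists (- x); [exact: AN | exists (- y); [exact: BN | rewrite opprD]].
- move=> r _ [x Ax [y By <-]].
  by exists (r * x); [exact: AL | exists (r * y); [exact: BL | rewrite mulrDr]].
- move=> r _ [x Ax [y By <-]].
  by exists (x * r); [exact: AR | exists (y * r); [exact: BR | rewrite mulrDl]].
Qed.

Lemma sub_ideal_addl A B : is_ideal B -> A `<=` ideal_add A B.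
Proof. by case=> B0 _ _ _ _ x Ax; exists x => //; exists 0 => //; rewrite addr0. Qed.

Lemma sub_ideal_addr A B : is_ideal A -> B `<=` ideal_add A B.
Proof. by case=> A0 _ _ _ _ y By; exists 0 => //; exists y => //; rewrite add0r. Qed.

Lemma is_ideal_bigcup (F : set (set R)) :
  F !=set0 -> F `<=` @is_ideal R -> total_on F subset ->
  is_ideal (\bigcup_(X in F) X).
Proof.
move=> [X0 FX0] Fideal Ftot.
have in_common X Y x y : F X -> F Y -> X x -> Y y ->
    exists2 Z, F Z & [/\ Z x, Z y & is_ideal Z].
  move=> FX FY Xx Yy; have [XY|YX] := Ftot X Y FX FY.
  - by exists Y => //; split => //; [exact: XY | exact: Fideal].
  - by exists X => //; split => //; [exact: YX | exact: Fideal].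
split.
- by exists X0 => //; case: (Fideal _ FX0).
- move=> x y [X FX Xx] [Y FY Yy].
  have [Z FZ [Zx Zy [_ ZD _ _ _]]] := in_common X Y x y FX FY Xx Yy.
  by exists Z => //; apply: ZD.
- by move=> x [X FX Xx]; exists X => //; case: (Fideal _ FX) => _ _ XN _ _; apply: XN.
- by move=> r x [X FX Xx]; exists X => //; case: (Fideal _ FX) => _ _ _ XL _; apply: XL.
- by move=> r x [X FX Xx]; exists X => //; case: (Fideal _ FX) => _ _ _ _ XR; apply: XR.
Qed.

Definition ideal_avoiding M I := is_ideal I /\ forall x, M x -> ~ I x.

Definition maximal_ideal_avoiding M I :=
  ideal_avoiding M I /\
  forall J, ideal_avoiding M J -> I `<=` J -> J `<=` I.

Lemma exists_maximal_ideal_avoiding M :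
  ~ M 0 -> exists I, maximal_ideal_avoiding M I.
Proof.
move=> M0.
pose T := {I | ideal_avoiding M I}.
pose le (u v : T) := `[< sval u `<=` sval v >].
have zero_avoiding : ideal_avoiding M [set 0].
  by split; [exact: is_ideal0 | move=> x Mx x0; apply: M0; rewrite -x0].
have [[I avI] Imax] : exists u : T, forall v, le u v -> v = u.
  apply: (@Zorn T le).
  - by move=> u; apply/asboolP.
  - by move=> u v w /asboolW uv /asboolW vw; apply/asboolP; apply: subset_trans uv vw.
  - move=> [X avX] [Y avY] /asboolW XY /asboolW YX.
    by apply: eq_exist; apply/seteqP.
  move=> C Ctot.
  have [->|/set0P [u0 Cu0]] := eqVneq C set0.
    by exists (exist _ _ zero_avoiding).
  have bigcup_avoiding : ideal_avoiding M (\bigcup_(X in sval @` C) X).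
    split; last by move=> x Mx [_ [u _ <-]]; apply: (svalP u).2.
    apply: is_ideal_bigcup => [|_ [u _ <-]|_ _ [u Cu <-] [v Cv <-]].
    - by exists (sval u0); exists u0.
    - exact: (svalP u).1.
    - by case: (Ctot u v Cu Cv) => /asboolW; [left | right].
  exists (exist _ _ bigcup_avoiding) => u Cu; apply/asboolP => x ux.
  by exists (sval u) => //; exists u.
exists I; split => // J avJ IJ.
by have /(congr1 sval) /= -> := Imax (exist _ J avJ) (asboolT IJ).
Qed.

Section Maximal.
Context {M I : set R}.
Hypothesis maxI : maximal_ideal_avoiding M I.

Lemma maximal_ideal_avoiding_meets J :
  is_ideal J -> I `<=` J -> ~ J `<=` I -> exists2 x, M x & J x.
Proof.
move=> idJ IJ nJI; apply: contrapT => noMJ; apply: nJI.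
by apply: maxI.2 => //; split=> // x Mx Jx; apply: noMJ; exists x.
Qed.

Lemma maximal_ideal_avoiding_add A :
  is_ideal A -> ~ A `<=` I -> exists x i, [/\ A x, I i & M (x + i)].
Proof.
have [[idI _] _] := maxI; move=> idA nAI.
have nAII : ~ ideal_add A I `<=` I.
  by move=> AII; apply/nAI/(subset_trans _ AII)/sub_ideal_addl.
have [z Mz [x Ax [i Ii xiz]]] := maximal_ideal_avoiding_meets (ideal_add A I)
  (is_ideal_add idA idI) (sub_ideal_addr _ _ idA) nAII.
by exists x, i; rewrite xiz.
Qed.

Lemma maximal_ideal_avoiding_prime :
  M !=set0 -> (forall x y, M x -> M y -> M (x * y)) -> prime_ideal I.
Proof.
move=> [m Mm] Mmul; have [[idI noMI] _] := maxI.
have [_ ID _ IL IR] := idI.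
split=> //; first by exists m; apply: noMI.
move=> A B idA idB ABI; apply: contrapT => /not_orP [nAI nBI].
have [x [i [Ax Ii Mxi]]] := maximal_ideal_avoiding_add A idA nAI.
have [y [j [By Ij Myj]]] := maximal_ideal_avoiding_add B idB nBI.
apply: (noMI _ (Mmul _ _ Mxi Myj)).
rewrite mulrDl !mulrDr.
exact: ID (ID _ _ (ABI _ _ Ax By) (IL _ _ Ij)) (ID _ _ (IR _ _ Ii) (IR _ _ Ii)).
Qed.

End Maximal.

Lemma minimal_non_nilpotent_quotient (a : R) (I : set R) (S : nzRingType)
    (f : {rmorphism R -> S}) :
  maximal_ideal_avoiding (range (GRing.exp a)) I ->
  (forall s : S, exists r, f r = s) -> (forall r, f r = 0 <-> I r) ->
  minimal_non_nilpotent (f a).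
Proof.
move=> maxI fsurj fker; have [[_ noPowI] _] := maxI.
split=> [[n fan0]|J idJ [s [Js s0]]].
  by apply: (noPowI (a ^+ n)); [exists n | apply/fker; rewrite rmorphXn].
have [r fr] := fsurj s; rewrite -fr in Js s0.
have IJ : I `<=` f @^-1` J by move=> i /fker; rewrite /preimage /= => ->; case: idJ.
have nJI : ~ f @^-1` J `<=` I by move=> JI; exact: s0 ((fker r).2 (JI r Js)).
have [_ [n _ <-] Jan] :=
  maximal_ideal_avoiding_meets maxI _ (is_ideal_preimage f idJ) IJ nJI.
by exists n; rewrite -rmorphXn.
Qed.

End IdealsAvoiding.

Theorem mainTheorem2 (R : nzRingType) (a : R) (ha : ~ nilpotent_elt a) :
  exists I : R -> Prop,
    prime_ideal I /\
    (forall (S : nzRingType) (f : {rmorphism R -> S}),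
       (forall s : S, exists r : R, f r = s) ->
       (forall r : R, f r = 0 <-> I r) ->
       minimal_non_nilpotent (f a)).
Proof.
pose powers := range (GRing.exp a).
have powers0 : ~ powers 0 by move=> [n _ an0]; apply: ha; exists n.
have powersM x y : powers x -> powers y -> powers (x * y).
  by move=> [m _ <-] [n _ <-]; exists (m + n)%N => //; rewrite exprD.
have [I maxI] := exists_maximal_ideal_avoiding powers powers0.
exists I; split.
- by apply: maximal_ideal_avoiding_prime maxI _ powersM; exists 1; exists 0%N.
- by move=> S f; exact: minimal_non_nilpotent_quotient.
Qed.
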